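(* Let $\mathcal{L}$ be an abstract logic such that $\mathcal{L}^-_{\omega\omega}\leq\mathcal{L}$. If $\mathcal{L}$ has the compactness property and the weak isomorphism property, then $\mathcal{L}$ has the finite weak dependence property: for every vocabulary $\tau$ and every $\varphi\in\mathcal{L}(\tau)$ there is a finite $\tau_0\subseteq\tau$ such that for all $\tau$-structures $\mathfrak{A},\mathfrak{B}$, if $\mathfrak{A}\upharpoonright\tau_0\sim\mathfrak{B}\upharpoonright\tau_0$ then ($\mathfrak{A}\models\varphi$ iff $\mathfrak{B}\models\varphi$).
   Context: $\mathcal{L}^-_{\omega\omega}$ denotes first-order logic without identity. An abstract logic $\mathcal{L}$ assigns to each vocabulary $\tau$ a set of sentences $\mathcal{L}(\tau)$ and a satisfaction relation with $\tau$-structures, satisfying the basic closure properties of abstract logics in the sense of Barwise–Feferman (isomorphism, reduct/expansion, renaming, closure under Boolean connectives, etc.), with the atom property taken relative to $\mathcal{L}^-_{\omega\omega}$; relativization is not required. $\mathcal{L}\leq\mathcal{L}'$ means every $\mathcal{L}(\tau)$-sentence is equivalent to some $\mathcal{L}'(\tau)$-sentence, for every $\tau$. Compactness property: for every $\tau$ and $\Phi\subseteq\mathcal{L}(\tau)$, if every finite subset of $\Phi$ has a model then $\Phi$ has a model. A weak isomorphism between $\tau$-structures $\mathfrak{A},\mathfrak{B}$ is a relation $R\subseteq A\times B$ with domain $A$ and range $B$ such that whenever $a_iRb_i$ ($i\le n$): $P^{\mathfrak{A}}(\bar a)$ iff $P^{\mathfrak{B}}(\bar b)$ for each $n$-ary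 relation symbol $P$, $f^{\mathfrak{A}}(\bar a)\,R\,f^{\mathfrak{B}}(\bar b)$ for each $n$-ary function symbol $f$, and $c^{\mathfrak{A}}Rc^{\mathfrak{B}}$ for each constant $c$; $\mathfrak{A}\sim\mathfrak{B}$ means such $R$ exists. Weak isomorphism property: $\mathfrak{A}\sim\mathfrak{B}$ implies $\mathfrak{A}$ and $\mathfrak{B}$ satisfy the same $\mathcal{L}$-sentences. $\mathfrak{A}\upharpoonright\tau_0$ is the reduct to $\tau_0$. *)

From mathcomp Require Import all_boot.
From Stdlib Require Import List.
Import ListNotations.

Set Implicit Arguments.
Unset Strict Implicit.
Unset Printing Implicit Defensive.

Record vocab := Vocab {
  relsym : Type;
  rar : relsym -> nat;
  funsym : Type;
  far : funsym -> nat
}.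

(* tau-structures (non-empty domain). *)
Record structure (tau : vocab) := Structure {
  carrier :> Type;
  point : carrier;
  rel : forall r : relsym tau, ('I_(rar r) -> carrier) -> Prop;
  fn  : forall f : funsym tau, ('I_(far f) -> carrier) -> carrier
}.
Arguments point {tau} s.
Arguments rel {tau} s r _.
Arguments fn {tau} s f _.

Definition isomorphic (tau : vocab) (A B : structure tau) : Prop :=
  exists (h : A -> B) (g : B -> A),
    (forall a, g (h a) = a) /\ (forall b, h (g b) = b) /\
    (forall r (xs : 'I_(rar r) -> A), rel A r xs <-> rel B r (fun i => h (xs i))) /\
    (forall f (xs : 'I_(far f) -> A), h (fn A f xs) = fn B f (fun i => h (xs i))).

Definition weak_iso (tau : vocab) (A B : structure tau) (R : A -> B -> Prop) : Prop :=
  (forall a : A, exists b : B, R a b) /\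
  (forall b : B, exists a : A, R a b) /\
  (forall r (xs : 'I_(rar r) -> A) (ys : 'I_(rar r) -> B),
      (forall i, R (xs i) (ys i)) -> (rel A r xs <-> rel B r ys)) /\
  (forall f (xs : 'I_(far f) -> A) (ys : 'I_(far f) -> B),
      (forall i, R (xs i) (ys i)) -> R (fn A f xs) (fn B f ys)).

Definition weakly_isomorphic (tau : vocab) (A B : structure tau) : Prop :=
  exists R : A -> B -> Prop, weak_iso R.

Record vocab_emb (tau tau' : vocab) := VocabEmb {
  emb_rel : relsym tau -> relsym tau';
  emb_rel_ar : forall r, rar (emb_rel r) = rar r;
  emb_rel_inj : forall r1 r2, emb_rel r1 = emb_rel r2 -> r1 = r2;
  emb_fun : funsym tau -> funsym tau';
  emb_fun_ar : forall f, far (emb_fun f) = far f;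
  emb_fun_inj : forall f1 f2, emb_fun f1 = emb_fun f2 -> f1 = f2
}.

(* Pulling a tau'-structure back along an embedding tau -> tau'
   (reduct to the image, followed by renaming). *)
Definition pullback (tau tau' : vocab) (e : vocab_emb tau tau') (B : structure tau')
  : structure tau :=
  @Structure tau B (point B)
    (fun r xs => rel B (emb_rel e r) (fun i => xs (cast_ord (emb_rel_ar e r) i)))
    (fun f xs => fn B (emb_fun e f) (fun i => xs (cast_ord (emb_fun_ar e f) i))).

Definition subvoc (tau : vocab) (PR : relsym tau -> bool) (PF : funsym tau -> bool)
  : vocab :=
  @Vocab {r | PR r} (fun r => rar (proj1_sig r)) {f | PF f} (fun f => far (proj1_sig f)).

Lemma proj1_sig_bool_inj (T : Type) (P : T -> bool) (x y : {t | P t}) :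
  proj1_sig x = proj1_sig y -> x = y.
Proof.
case: x y => [x px] [y py] /= exy; subst y.
by rewrite (bool_irrelevance px py).
Qed.

Definition subvoc_emb (tau : vocab) (PR : relsym tau -> bool) (PF : funsym tau -> bool)
  : vocab_emb (subvoc PR PF) tau :=
  @VocabEmb (subvoc PR PF) tau (@proj1_sig _ _) (fun _ => erefl)
    (@proj1_sig_bool_inj _ _)
    (@proj1_sig _ _) (fun _ => erefl) (@proj1_sig_bool_inj _ _).

Definition reduct (tau : vocab) (PR : relsym tau -> bool) (PF : funsym tau -> bool)
  (A : structure tau) : structure (subvoc PR PF) :=
  pullback (subvoc_emb PR PF) A.

Definition finite_pred (T : Type) (P : T -> bool) : Prop :=
  exists l : list T, forall x, P x -> In x l.

(* First-order logic without identity, L^-_{omega omega}.              *)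
Inductive term (tau : vocab) : Type :=
| tvar : nat -> term tau
| tapp : forall f : funsym tau, ('I_(far f) -> term tau) -> term tau.
Arguments tvar {tau} n.

Inductive fo (tau : vocab) : Type :=
| fatom : forall r : relsym tau, ('I_(rar r) -> term tau) -> fo tau
| fneg : fo tau -> fo tau
| fand : fo tau -> fo tau -> fo tau
| fall : nat -> fo tau -> fo tau.

Fixpoint teval {tau : vocab} (A : structure tau) (s : nat -> A) (t : term tau) : A :=
  match t with
  | tvar n => s n
  | tapp f ts => fn A f (fun i => @teval tau A s (ts i))
  end.

Definition upd (X : Type) (s : nat -> X) (x : nat) (a : X) : nat -> X :=
  fun n => if n == x then a else s n.

Fixpoint fo_sat {tau : vocab} (A : structure tau) (s : nat -> A) (phi : fo tau) : Prop :=
  match phi with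
  | fatom r ts => rel A r (fun i => @teval tau A s (ts i))
  | fneg psi => ~ @fo_sat tau A s psi
  | fand p q => @fo_sat tau A s p /\ @fo_sat tau A s q
  | fall x psi => forall a : A, @fo_sat tau A (upd s x a) psi
  end.

Fixpoint tfree {tau : vocab} (x : nat) (t : term tau) : Prop :=
  match t with
  | tvar n => n = x
  | tapp f ts => exists i, @tfree tau x (ts i)
  end.

Fixpoint fo_free {tau : vocab} (x : nat) (phi : fo tau) : Prop :=
  match phi with
  | fatom r ts => exists i, tfree x (ts i)
  | fneg psi => @fo_free tau x psi
  | fand p q => @fo_free tau x p \/ @fo_free tau x q
  | fall y psi => y <> x /\ @fo_free tau x psi
  end.

Definition fo_sentence (tau : vocab) (phi : fo tau) : Prop := forall x, ~ fo_free x phi.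

(* Truth of a sentence (the assignment is irrelevant; we use the constant one). *)
Definition fo_models (tau : vocab) (A : structure tau) (phi : fo tau) : Prop :=
  @fo_sat tau A (fun _ => point A) phi.

Record logic := Logic {
  sent : vocab -> Type;
  sat : forall tau : vocab, structure tau -> sent tau -> Prop
}.
Arguments sat _ {tau} _ _.

(* Basic closure properties of an abstract logic (relativization not required;
   atom property relative to first-order logic without identity). *)
Definition is_abstract_logic (L : logic) : Prop :=
  (forall tau (A B : structure tau), isomorphic A B ->
     forall phi : sent L tau, sat L A phi <-> sat L B phi) /\
  (forall tau tau' (e : vocab_emb tau tau') (phi : sent L tau),
     exists psi : sent L tau', forall B : structure tau',
       sat L B psi <-> sat L (pullback e B) phi) /\
  (forall tau (phi : sent L tau), exists psi : sent L tau,
     forall A : structure tau, sat L A psi <-> ~ sat L A phi) /\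
  (forall tau (phi chi : sent L tau), exists psi : sent L tau,
     forall A : structure tau, sat L A psi <-> (sat L A phi /\ sat L A chi)) /\
  (forall tau (r : relsym tau) (ts : 'I_(rar r) -> term tau), fo_sentence (@fatom tau r ts) ->
     exists psi : sent L tau, forall A : structure tau,
       sat L A psi <-> fo_models A (@fatom tau r ts)).

Definition fo_minus_le (L : logic) : Prop :=
  forall tau (phi : fo tau), fo_sentence phi ->
    exists psi : sent L tau, forall A : structure tau, sat L A psi <-> fo_models A phi.

Definition compactness (L : logic) : Prop :=
  forall tau (Phi : sent L tau -> Prop),
    (forall l : list (sent L tau), (forall phi, In phi l -> Phi phi) ->
       exists A : structure tau, forall phi, In phi l -> sat L A phi) ->
    exists A : structure tau, forall phi, Phi phi -> sat L A phi.

Definition weak_iso_property (L : logic) : Prop :=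
  forall tau (A B : structure tau), weakly_isomorphic A B ->
    forall phi : sent L tau, sat L A phi <-> sat L B phi.

Definition finite_weak_dependence (L : logic) : Prop :=
  forall tau (phi : sent L tau),
    exists (PR : relsym tau -> bool) (PF : funsym tau -> bool),
      finite_pred PR /\ finite_pred PF /\
      forall A B : structure tau,
        weakly_isomorphic (reduct PR PF A) (reduct PR PF B) ->
        (sat L A phi <-> sat L B phi).

(* Double the vocabulary: two disjoint copies of tau and a binary symbol E.  "E is a weak
   isomorphism between the two copies" is axiomatized by identity-free first-order sentences,
   one per symbol of tau plus two totality axioms, hence by L-sentences; add the L-sentence
   saying that phi holds in exactly one copy.  If phi had no finite support, each finite part
   of this theory would have a model: the product A x B of a pair of structures that disagree
   on phi although their reducts to the finitely many symbols involved are weakly isomorphic,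
   with E read through that weak isomorphism.  By compactness the whole theory has a model, in
   which E is a weak isomorphism between the two copies, contradicting the weak isomorphism
   property. *)

From Stdlib Require Import List.
From mathcomp Require Import all_boot zify boolp.

Lemma comp_cast_ord (T : Type) n (E : n = n) (xs : 'I_n -> T) :
  (fun i => xs (cast_ord E i)) = xs.
Proof. by apply: funext => i; rewrite cast_ord_id. Qed.

Lemma finite_witnesses {X Y : Type} (Q : X -> Y -> Prop) (l : list X) :
  exists ly : list Y, forall x, In x l -> (exists y, Q x y) ->
    exists y, In y ly /\ Q x y.
Proof.
elim: l => [|x l [ly Hly]]; first by exists nil.
have [[y Hy]|Hnone] := EM (exists y, Q x y).
  exists (y :: ly) => x' [<-|Hin] Hex; first by exists y; split; [left|].
  by have [y' [? ?]] := Hly _ Hin Hex; exists y'; split; [right|].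
by exists ly => x' [<-|Hin] Hex; [contradiction | exact: Hly].
Qed.

Lemma finite_pred_preim (X Y : Type) (g : Y -> X) (l : list X) :
  injective g -> finite_pred (fun y => `[< In (g y) l >]).
Proof.
move=> g_inj; have [ly Hly] := finite_witnesses (fun x y => g y = x) l.
exists ly => y /asboolP Hy.
by have [y' [Hy' /g_inj <-]] := Hly _ Hy (ex_intro _ y erefl).
Qed.

Section FirstOrderConnectives.
Context {tau : vocab}.

Definition fimp (a b : fo tau) : fo tau := fneg (fand a (fneg b)).
Definition fiff (a b : fo tau) : fo tau := fand (fimp a b) (fimp b a).
Definition fexists (x : nat) (b : fo tau) : fo tau := fneg (fall x (fneg b)).

Fixpoint fall_n (k : nat) (b : fo tau) : fo tau :=
  if k is k'.+1 then fall k' (fall_n k' b) else b.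

Lemma free_fall_n k b x : fo_free x (fall_n k b) -> fo_free x b /\ k <= x.
Proof.
elim: k => [|k IH] //= [Hkx /IH [Hb Hx]]; split=> //.
by rewrite ltn_neqAle Hx andbT; apply/eqP.
Qed.

Context {C : structure tau}.

Lemma sat_fimp (s : nat -> C) a b : fo_sat s (fimp a b) <-> (fo_sat s a -> fo_sat s b).
Proof. by rewrite /=; split=> [H Ha|H [/H]//]; apply: contrapT => Hb; apply: H. Qed.

Lemma sat_fiff (s : nat -> C) a b : fo_sat s (fiff a b) <-> (fo_sat s a <-> fo_sat s b).
Proof. by split=> [[/sat_fimp ? /sat_fimp ?]|[? ?]]; [|split; apply/sat_fimp]. Qed.

Lemma sat_fall (s : nat -> C) x b :
  fo_sat s (fall x b) <-> forall a, fo_sat (upd s x a) b.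
Proof. by []. Qed.

Lemma sat_fexists (s : nat -> C) x b :
  fo_sat s (fexists x b) <-> exists a, fo_sat (upd s x a) b.
Proof. by rewrite /= -not_existsP. Qed.

Lemma sat_fall_n (s : nat -> C) k b :
  fo_sat s (fall_n k b) <-> forall t, (forall j, k <= j -> t j = s j) -> fo_sat t b.
Proof.
elim: k s => [|k IH] s /=.
  split=> [Hb t Hts|]; last by apply.
  by have -> : t = s by apply: funext => j; apply: Hts.
split=> [H t Hts|H a].
  apply: ((IH _).1 (H (t k))) => j Hj; rewrite /upd.
  by case: eqP => [->//|/eqP ?]; apply: Hts; lia.
apply/IH => t Hts; apply: H => j Hj; rewrite Hts; last lia.
by rewrite /upd; case: eqP => //; lia.
Qed.

End FirstOrderConnectives.

Section ConcatAssignment.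
Context {T : Type} (c : T) {n : nat} (xs ys : 'I_n -> T).

Definition concat_asg : nat -> T :=
  nth c (map xs (enum 'I_n) ++ map ys (enum 'I_n)).

Lemma concat_asg_left (i : 'I_n) : concat_asg i = xs i.
Proof.
rewrite /concat_asg nth_cat size_map size_enum_ord ltn_ord.
by rewrite (nth_map i) ?nth_ord_enum ?size_enum_ord.
Qed.

Lemma concat_asg_right (i : 'I_n) : concat_asg (n + i) = ys i.
Proof.
rewrite /concat_asg nth_cat size_map size_enum_ord ltnNge leq_addr /= addKn.
by rewrite (nth_map i) ?nth_ord_enum ?size_enum_ord.
Qed.

Lemma concat_asg_out j : n + n <= j -> concat_asg j = c.
Proof.
by move=> Hj; rewrite /concat_asg nth_default // size_cat !size_map -enumT size_enum_ord.
Qed.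

End ConcatAssignment.

Inductive double_rel (tau : vocab) :=
  | rel_left of relsym tau | rel_right of relsym tau | rel_link.
Inductive double_fun (tau : vocab) :=
  | fun_left of funsym tau | fun_right of funsym tau.
Arguments rel_left {tau} r.
Arguments rel_right {tau} r.
Arguments rel_link {tau}.
Arguments fun_left {tau} f.
Arguments fun_right {tau} f.

Definition double_vocab (tau : vocab) : vocab := {|
  relsym := double_rel tau;
  rar := fun s => match s with rel_left r | rel_right r => rar r | rel_link => 2 end;
  funsym := double_fun tau;
  far := fun s => match s with fun_left f | fun_right f => far f end |}.

Definition left_emb (tau : vocab) : vocab_emb tau (double_vocab tau) :=
  @VocabEmb tau (double_vocab tau)
    rel_left (fun _ => erefl) (fun _ _ => ltac:(by case))
    fun_left (fun _ => erefl) (fun _ _ => ltac:(by case)).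

Definition right_emb (tau : vocab) : vocab_emb tau (double_vocab tau) :=
  @VocabEmb tau (double_vocab tau)
    rel_right (fun _ => erefl) (fun _ _ => ltac:(by case))
    fun_right (fun _ => erefl) (fun _ _ => ltac:(by case)).

Section LinkRelation.
Context {tau : vocab}.

Definition link_atom (u v : term (double_vocab tau)) : fo (double_vocab tau) :=
  @fatom (double_vocab tau) rel_link (fun j : 'I_2 => if val j == 0 then u else v).

Definition linked (C : structure (double_vocab tau)) (p q : C) : Prop :=
  rel C rel_link (fun j : 'I_2 => if val j == 0 then p else q).

Lemma sat_link_atom (C : structure (double_vocab tau)) (s : nat -> C) u v :
  fo_sat s (link_atom u v) <-> linked C (teval s u) (teval s v).
Proof.
rewrite /= /linked; have -> // : (fun j : 'I_2 => teval s (if val j == 0 then u else v)) =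
  (fun j : 'I_2 => if val j == 0 then teval s u else teval s v).
by apply: funext => j; case: ifP.
Qed.

Lemma free_link_atom x u v : fo_free x (link_atom u v) -> tfree x u \/ tfree x v.
Proof. by case=> j; case: ifP; auto. Qed.

Fixpoint link_guard (n k : nat) (b : fo (double_vocab tau)) : fo (double_vocab tau) :=
  if k is k'.+1 then fimp (link_atom (tvar k') (tvar (n + k'))) (link_guard n k' b) else b.

Lemma sat_link_guard (C : structure (double_vocab tau)) (s : nat -> C) n k b :
  fo_sat s (link_guard n k b) <->
  ((forall i, i < k -> linked C (s i) (s (n + i))) -> fo_sat s b).
Proof.
elim: k => [|k IH]; first by split=> // H; apply: H.
rewrite sat_fimp sat_link_atom IH /=; split=> [H Hlink|H Hk Hlink].
  by apply: H => [|i Hi]; apply: Hlink; lia.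
apply: H => i; rewrite ltnS leq_eqVlt => /orP[/eqP -> //|]; exact: Hlink.
Qed.

Lemma free_link_guard n k b x : fo_free x (link_guard n k b) -> x < n + k \/ fo_free x b.
Proof.
elim: k => [|k IH] /=; first by right.
by case=> [/free_link_atom [] /= Hx | /IH []]; auto; left; lia.
Qed.

End LinkRelation.

Inductive wi_clause (tau : vocab) :=
  | total_left | total_right | rel_clause of relsym tau | fun_clause of funsym tau.
Arguments total_left {tau}.
Arguments total_right {tau}.
Arguments rel_clause {tau} r.
Arguments fun_clause {tau} f.

Definition wi_cond {tau : vocab} (A B : structure tau) (R : A -> B -> Prop)
    (c : wi_clause tau) : Prop :=
  match c with
  | total_left => forall a, exists b, R a b
  | total_right => forall b, exists a, R a b
  | rel_clause r => forall xs ys, (forall i, R (xs i) (ys i)) -> (rel A r xs <-> rel B r ys)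
  | fun_clause f => forall xs ys, (forall i, R (xs i) (ys i)) -> R (fn A f xs) (fn B f ys)
  end.

Lemma weak_isoE {tau : vocab} (A B : structure tau) (R : A -> B -> Prop) :
  weak_iso R <-> forall c, wi_cond A B R c.
Proof.
split=> [[? [? [? ?]]] []//|H].
split; [|split; [|split]].
- exact: (H total_left).
- exact: (H total_right).
- by move=> r; apply: (H (rel_clause r)).
- by move=> f; apply: (H (fun_clause f)).
Qed.

Definition clause_ax {tau : vocab} (c : wi_clause tau) : fo (double_vocab tau) :=
  match c with
  | total_left => fall 0 (fexists 1 (link_atom (tvar 0) (tvar 1)))
  | total_right => fall 1 (fexists 0 (link_atom (tvar 0) (tvar 1)))
  | rel_clause r =>
      let n := rar r in
      fall_n (n + n) (link_guard n n (fiff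
        (@fatom (double_vocab tau) (rel_left r) (fun i => tvar i))
        (@fatom (double_vocab tau) (rel_right r) (fun i => tvar (n + i)))))
  | fun_clause f =>
      let n := far f in
      fall_n (n + n) (link_guard n n (link_atom
        (@tapp (double_vocab tau) (fun_left f) (fun i => tvar i))
        (@tapp (double_vocab tau) (fun_right f) (fun i => tvar (n + i)))))
  end.

Lemma clause_ax_sentence {tau : vocab} (c : wi_clause tau) : fo_sentence (clause_ax c).
Proof.
case: c => [||r|f] x /=.
1, 2: by case=> H0 [H1 /free_link_atom [] /= Hx]; subst.
- move=> /free_fall_n [/free_link_guard [|] Hfree Hx]; first lia.
  by case: Hfree => [[[i /= Hi]|[i /= Hi]]|[[i /= Hi]|[i /= Hi]]]; have /= := ltn_ord i; lia.
- move=> /free_fall_n [/free_link_guard [|] Hfree Hx]; first lia.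
  by case/free_link_atom: Hfree => [[i /= Hi]|[i /= Hi]]; have /= := ltn_ord i; lia.
Qed.

Lemma models_clause_ax {tau : vocab} (C : structure (double_vocab tau)) (c : wi_clause tau) :
  fo_models C (clause_ax c) <->
  wi_cond (pullback (left_emb tau) C) (pullback (right_emb tau) C) (linked C) c.
Proof.
rewrite /fo_models; case: c => [||r|f].
1, 2: rewrite sat_fall; split=> H x; [have /sat_fexists [y /sat_link_atom Hy] := H x
                                   | apply/sat_fexists; have [y Hy] := H x];
      by exists y; try apply/sat_link_atom.
all: rewrite sat_fall_n; split=> [H xs ys Hxy|H t _]; rewrite /= ?comp_cast_ord.
1, 3: have := H (concat_asg (point C) xs ys) (concat_asg_out (point C) xs ys);
      rewrite sat_link_guard ?sat_fiff ?sat_link_atom /=;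
      rewrite (funext (concat_asg_left _ xs ys)) (funext (concat_asg_right _ xs ys));
      apply=> i Hi; have := Hxy (Ordinal Hi);
      by rewrite -(concat_asg_left (point C) xs ys) -(concat_asg_right (point C) xs ys).
all: rewrite sat_link_guard ?sat_fiff ?sat_link_atom => Hlink.
all: exact: H (fun i => t i) (fun i => t (_ + i)) (fun i => Hlink i (ltn_ord i)).
Qed.

Section PairStructure.
Context {tau : vocab} (A B : structure tau) (R : A -> B -> Prop).

Definition pair_rel (s : relsym (double_vocab tau)) : ('I_(rar s) -> A * B) -> Prop :=
  match s with
  | rel_left r => fun ps => rel A r (fun i => (ps i).1)
  | rel_right r => fun ps => rel B r (fun i => (ps i).2)
  | rel_link => fun ps => R (ps ord0).1 (ps ord_max).2
  end.

Definition pair_fn (s : funsym (double_vocab tau)) : ('I_(far s) -> A * B) -> A * B :=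
  match s with
  | fun_left f => fun ps => (fn A f (fun i => (ps i).1), point B)
  | fun_right f => fun ps => (point A, fn B f (fun i => (ps i).2))
  end.

Definition pair_structure : structure (double_vocab tau) :=
  @Structure (double_vocab tau) (A * B) (point A, point B) pair_rel pair_fn.

Lemma pullback_left_pair : weakly_isomorphic (pullback (left_emb tau) pair_structure) A.
Proof.
exists (fun p a => p.1 = a); split; [|split; [|split]].
- by move=> p; exists p.1.
- by move=> a; exists (a, point B).
- move=> r ps xs /funext <- /=; under eq_fun do rewrite cast_ord_id; done.
- move=> f ps xs /funext <- /=; under eq_fun do rewrite cast_ord_id; done.
Qed.

Lemma pullback_right_pair : weakly_isomorphic (pullback (right_emb tau) pair_structure) B.
Proof.
exists (fun p b => p.2 = b); split; [|split; [|split]].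
- by move=> p; exists p.2.
- by move=> b; exists (point A, b).
- move=> r ps ys /funext <- /=; under eq_fun do rewrite cast_ord_id; done.
- move=> f ps ys /funext <- /=; under eq_fun do rewrite cast_ord_id; done.
Qed.

Lemma pair_wi_cond (c : wi_clause tau) : wi_cond A B R c ->
  wi_cond (pullback (left_emb tau) pair_structure) (pullback (right_emb tau) pair_structure)
    (linked pair_structure) c.
Proof.
case: c => [||r|f] H /=.
- by move=> p; have [b Hb] := H p.1; exists (point A, b).
- by move=> q; have [a Ha] := H q.2; exists (a, point B).
- by move=> ps qs Hpq; apply: H => i; apply: Hpq.
- by move=> ps qs Hpq; apply: H => i; apply: Hpq.
Qed.

End PairStructure.

Definition clause_in {tau : vocab} (PR : relsym tau -> bool) (PF : funsym tau -> bool)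
    (c : wi_clause tau) : bool :=
  match c with
  | total_left | total_right => true
  | rel_clause r => PR r
  | fun_clause f => PF f
  end.

Lemma wi_cond_reduct {tau : vocab} {PR : relsym tau -> bool} {PF : funsym tau -> bool}
    {A B : structure tau} {R : A -> B -> Prop} (c : wi_clause tau) :
  weak_iso (A := reduct PR PF A) (B := reduct PR PF B) R -> clause_in PR PF c ->
  wi_cond A B R c.
Proof.
case=> HA [HB [Hrel Hfn]]; case: c => [||r|f] /= Hc // xs ys Hxy.
- by have := Hrel (exist _ r Hc) xs ys Hxy; rewrite /= !comp_cast_ord.
- by have := Hfn (exist _ f Hc) xs ys Hxy; rewrite /= !comp_cast_ord.
Qed.

Lemma sent_xor {L : logic}
    (Lneg : forall tau (phi : sent L tau), exists psi : sent L tau,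
       forall A : structure tau, sat L A psi <-> ~ sat L A phi)
    (Lconj : forall tau (phi chi : sent L tau), exists psi : sent L tau,
       forall A : structure tau, sat L A psi <-> (sat L A phi /\ sat L A chi))
    {tau : vocab} (phi1 phi2 : sent L tau) :
  exists chi : sent L tau, forall A, sat L A chi <-> ~ (sat L A phi1 <-> sat L A phi2).
Proof.
have [both Hboth] := Lconj _ phi1 phi2.
have [[nphi1 Hn1] [nphi2 Hn2]] := (Lneg _ phi1, Lneg _ phi2).
have [neither Hneither] := Lconj _ nphi1 nphi2.
have [[nboth Hnb] [nneither Hnn]] := (Lneg _ both, Lneg _ neither).
have [chi Hchi] := Lconj _ nboth nneither.
by exists chi => A; rewrite Hchi Hnb Hnn Hboth Hneither Hn1 Hn2; tauto.
Qed.

Section CompactnessArgument.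
Context {L : logic} {tau : vocab} {phi : sent L tau} {chi : sent L (double_vocab tau)}.
Hypothesis chiE : forall C, sat L C chi <->
  ~ (sat L (pullback (left_emb tau) C) phi <-> sat L (pullback (right_emb tau) C) phi).
Hypothesis Lweak : weak_iso_property L.

Definition wi_theory (psi : sent L (double_vocab tau)) : Prop :=
  psi = chi \/ exists c, forall C, sat L C psi <-> fo_models C (clause_ax c).

Lemma wi_theory_unsat : fo_minus_le L -> ~ exists C, forall psi, wi_theory psi -> sat L C psi.
Proof.
move=> Lfo [C HC]; have /chiE := HC chi (or_introl erefl); apply; apply: Lweak.
exists (linked C); apply/weak_isoE => c.
have [psi Hpsi] := Lfo _ _ (clause_ax_sentence c).
by apply/models_clause_ax/Hpsi/HC; right; exists c.
Qed.

Lemma wi_theory_finsat :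
  ~ (exists PR PF, finite_pred PR /\ finite_pred PF /\ forall A B : structure tau,
       weakly_isomorphic (reduct PR PF A) (reduct PR PF B) -> (sat L A phi <-> sat L B phi)) ->
  forall l, (forall psi, In psi l -> wi_theory psi) ->
  exists C, forall psi, In psi l -> sat L C psi.
Proof.
move=> no_support l Hl.
have [cs Hcs] := finite_witnesses
  (fun psi c => forall C, sat L C psi <-> fo_models C (clause_ax c)) l.
pose PR r := `[< In (rel_clause r) cs >].
pose PF f := `[< In (fun_clause f) cs >].
have [A [B [[R HR] Hdis]]] : exists A B : structure tau,
    weakly_isomorphic (reduct PR PF A) (reduct PR PF B) /\ ~ (sat L A phi <-> sat L B phi).
  apply: contrapT => Hall; apply: no_support; exists PR, PF.
  split; first by apply: finite_pred_preim => ? ? [].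
  split; first by apply: finite_pred_preim => ? ? [].
  by move=> A B HAB; apply: contrapT => Hdis; apply: Hall; exists A, B.
exists (pair_structure A B R) => psi Hin; case: (Hl psi Hin) => [->|[c Hc]].
  apply/chiE; rewrite (Lweak _ _ _ (pullback_left_pair A B R)).
  by rewrite (Lweak _ _ _ (pullback_right_pair A B R)).
have [c' [Hc' Hpsi]] := Hcs psi Hin (ex_intro _ c Hc).
apply/Hpsi/models_clause_ax/pair_wi_cond; apply: (wi_cond_reduct _ HR).
by case: c' Hc' {Hpsi} => //= *; apply/asboolP.
Qed.

End CompactnessArgument.

Theorem lemma5 (L : logic) (HL : is_abstract_logic L) (Hle : fo_minus_le L)
  (Hcomp : compactness L) (Hweak : weak_iso_property L) :
  finite_weak_dependence L.
Proof.
move=> tau phi; case: HL => _ [Lren [Lneg [Lconj _]]].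
have [[phi1 H1] [phi2 H2]] := (Lren _ _ (left_emb tau) phi, Lren _ _ (right_emb tau) phi).
have [chi Hchi] := sent_xor Lneg Lconj phi1 phi2.
have chiE : forall C, sat L C chi <->
    ~ (sat L (pullback (left_emb tau) C) phi <-> sat L (pullback (right_emb tau) C) phi).
  by move=> C; rewrite Hchi H1 H2.
apply: contrapT => no_support; apply: (wi_theory_unsat chiE Hweak Hle).
exact/Hcomp/(wi_theory_finsat chiE Hweak no_support).
Qed.
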